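(* Let $b\in\mathbb Z_T$ be nonzero and let $B_1=\cdots=B_s=\{0,b\}$ be $s$ identical size-$2$ subsets of $\mathbb Z_T$ with $s\ge T^2$. Then the multiset $B_1+B_2+\cdots+B_s$ has bias at most $4|H|/s^{1/2}$ with respect to the subgroup $H=\langle b\rangle$.
   Context: $\mathbb Z_T$ is the additive cyclic group of order $T$. For multisets $A,B$, $A+B=\{a+b:a\in A,b\in B\}$ as a multiset; $\mu_A(x)$ is the multiplicity of $x$ in $A$. A multiset $A$ has bias at most $\epsilon$ with respect to a subgroup $H$ if $\mu_A(a)\le(1+\epsilon)\mu_A(a+h)$ for all $a\in A$ and all $h\in H$. $\langle b\rangle$ is the subgroup generated by $b$. *)

From HB Require Import structures.
From mathcomp Require Import all_boot all_order all_algebra all_fingroup.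
From mathcomp Require Import reals.
Set Implicit Arguments. Unset Strict Implicit. Unset Printing Implicit Defensive.
Import Order.TTheory GRing.Theory Num.Theory.

(* A finite multiset over a finite abelian group V is represented by its
   multiplicity function mu_A : V -> nat. *)
Definition mset (V : finZmodType) := V -> nat.

Definition mset_of_set (V : finZmodType) (S : {set V}) : mset V :=
  fun x => (x \in S) : nat.

Definition msum (V : finZmodType) (A B : mset V) : mset V :=
  fun x => \sum_(a : V) \sum_(c : V) ((a + c == x)%R * (A a * B c))%N.

Definition msum_seq (V : finZmodType) (Bs : seq (mset V)) : mset V :=
  foldr (@msum V) (mset_of_set [set 0%R]) Bs.

Definition bias_at_most (R : realType) (V : finZmodType) (A : mset V)
  (H : {set V}) (eps : R) : Prop :=
  forall a : V, (0 < A a)%N -> forall h : V, h \in H ->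
    ((A a)%:R <= (1 + eps) * (A (a + h)%R)%:R)%R.

From HB Require Import structures.
From mathcomp Require Import all_boot all_order all_algebra all_fingroup.
From mathcomp Require Import cyclic reals trigo.
From mathcomp Require Import ring lra zify.
Import Order.TTheory GRing.Theory Num.Theory.

(* If n is the order of b, the s-fold sum of {0, b} gives j b the multiplicity
   S_j = sum_(k = j mod n) C(s, k).  Discrete Fourier analysis on Z/nZ gives
   n S_j = sum_(t < n) (2 cos (pi t / n))^s cos ((s - 2 j) pi t / n), whose
   t = 0 term is 2^s while the others add up to at most 2^s E, with
   E = sum_(0 < t < n) |cos (pi t / n)|^s <= 2 sum_(t > 0) q^t, q = cos (pi / n)^s.
   From cos (pi / n) <= 1 - 2 / n^2 one gets q (1 + z^2)^2 <= 1 for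
   z = sqrt s / n >= 1, hence E <= 2 / (z + 2) and
   S_j / S_j' <= (1 + E) / (1 - E) <= 1 + 4 / z = 1 + 4 n / sqrt s. *)

Section Trigonometry.
Variable R : realType.
Local Open Scope ring_scope.
Implicit Types (x y : R) (n m k s : nat).

Lemma sum_binomial_cos s x y :
  \sum_(k < s.+1) 'C(s, k)%:R * cos (k%:R * x + y)
  = (2 * cos (x / 2)) ^+ s * cos (s%:R * x / 2 + y).
Proof.
elim: s y => [|s IHs] y.
  by rewrite big_ord_recl big_ord0 bin0 !mul0r !mul1r addr0.
rewrite big_ord_recl bin0 mul1r.
under eq_bigr => k _ do rewrite binS natrD mulrDl.
rewrite big_split /= addrA.
have -> : cos (0%:R * x + y)
      + \sum_(k < s.+1) 'C(s, k.+1)%:R * cos ((bump 0 k)%:R * x + y)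
    = \sum_(k < s.+1) 'C(s, k)%:R * cos (k%:R * x + y).
  rewrite [RHS]big_ord_recl /= bin0 mul1r; congr (_ + _).
  by rewrite big_ord_recr /= bin_small // mul0r addr0.
have -> : \sum_(k < s.+1) 'C(s, k)%:R * cos ((bump 0 k)%:R * x + y)
    = \sum_(k < s.+1) 'C(s, k)%:R * cos (k%:R * x + (y + x)).
  by apply: eq_bigr => k _; rewrite /bump add1n mulrSr mulrDl mul1r addrAC addrA.
rewrite !IHs.
set u := s.+1%:R * x / 2 + y.
have -> : s%:R * x / 2 + y = u - x / 2 by rewrite /u -addn1 natrD; field.
have -> : s%:R * x / 2 + (y + x) = u + x / 2 by rewrite /u -addn1 natrD; field.
by rewrite [cos (u - _)]cosB [cos (u + _)]cosD exprS; ring.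
Qed.

Lemma sin_pi_frac_neq0 n m : (0 < n)%N -> ~~ (n %| m)%N ->
  sin (pi * m%:R / n%:R) != 0 :> R.
Proof.
move=> n_gt0 ndvd_m; have n_gt0' : 0 < n%:R :> R by rewrite ltr0n.
have -> : pi * m%:R / n%:R = pi * (m %% n)%:R / n%:R + pi *+ (m %/ n) :> R.
  by rewrite {1}(divn_eq m n) natrD natrM -mulr_natr; field; rewrite gt_eqF.
rewrite (alternatingn (@sinDpi R)) mulf_eq0 negb_or signr_eq0 /=.
have mod_gt0 : (0 < m %% n)%N by rewrite lt0n; exact: ndvd_m.
rewrite gt_eqF // sin_gt0_pi // divr_gt0 ?mulr_gt0 ?pi_gt0 ?ltr0n //=.
by rewrite ltr_pdivrMr // ltr_pM2l ?pi_gt0 // ltr_nat ltn_pmod.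
Qed.

Lemma sum_cos_2pi_frac n m : (0 < n)%N ->
  \sum_(t < n) cos (t%:R * (pi *+ 2 * m%:R / n%:R))
  = if (n %| m)%N then n%:R else 0 :> R.
Proof.
move=> n_gt0; have n_neq0 : n%:R != 0 :> R by rewrite pnatr_eq0 -lt0n.
case: ifP => [/dvdnP[d ->] | ndvd_m].
  under eq_bigr => t _.
    have -> : t%:R * (pi *+ 2 * (d * n)%:R / n%:R) = 0 + pi *+ 2 *+ (t * d) :> R.
      by rewrite add0r -mulr_natr !natrM; field.
    rewrite (periodicn (@cosD2pi R)) cos0.
  over.
  by rewrite sumr_const card_ord.
set th := pi *+ 2 * m%:R / n%:R.
pose F t := sin (t%:R * th - th / 2).
(* product-to-sum: each term telescopes after multiplication by 2 sin (th / 2) *)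
have telescope_step t : 2 * sin (th / 2) * cos (t%:R * th) = F t.+1 - F t.
  rewrite /F (_ : t.+1%:R * th - th / 2 = t%:R * th + th / 2); last first.
    by rewrite mulrSr; field.
  by rewrite sinD sinB; ring.
have : 2 * sin (th / 2) * \sum_(t < n) cos (t%:R * th) = 0.
  rewrite mulr_sumr; under eq_bigr => t _ do rewrite telescope_step.
  rewrite -(big_mkord xpredT (fun t => F t.+1 - F t)) telescope_sumr // /F.
  have -> : n%:R * th - th / 2 = - (th / 2) + pi *+ 2 *+ m.
    by rewrite /th -mulr_natr; field.
  by rewrite (periodicn (@sinD2pi R)) mul0r add0r; ring.
move/eqP; rewrite !mulf_eq0 pnatr_eq0 /= => /orP[|/eqP //].
have -> : th / 2 = pi * m%:R / n%:R by rewrite /th -mulr_natr; field.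
by rewrite (negPf (sin_pi_frac_neq0 _ _ n_gt0 (negbT ndvd_m))).
Qed.

Lemma sum_cos_2pi_frac_sub n k j : (0 < n)%N ->
  \sum_(t < n) cos (t%:R * (pi *+ 2 * (k%:R - j%:R) / n%:R))
  = (k == j %[mod n])%N%:R * n%:R :> R.
Proof.
move=> n_gt0; wlog le_jk : k j / (j <= k)%N.
  move=> W; have [/W // | /ltnW/W] := leqP j k.
  rewrite eq_sym => <-; apply: eq_bigr => t _.
  by rewrite -cosN; congr cos; ring.
rewrite -natrB // sum_cos_2pi_frac // eqn_mod_dvd //.
by case: ifP; rewrite ?mul1r ?mul0r.
Qed.

Lemma cos_natmul_le_expr k x : 0 <= x -> 0 <= cos x -> k%:R * x <= pi ->
  cos (k%:R * x) <= cos x ^+ k.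
Proof.
move=> x_ge0 cos_ge0; elim: k => [|k IHk] kx_le; first by rewrite mul0r cos0.
have k'x_le : k%:R * x <= pi by apply: le_trans kx_le; rewrite ler_wpM2r ?ler_nat.
have x_le : x <= pi by apply: le_trans kx_le; rewrite ler_peMl ?ler1n.
have sin_kx_ge0 : 0 <= sin (k%:R * x) by rewrite sin_ge0_pi ?k'x_le ?mulr_ge0.
have sin_x_ge0 : 0 <= sin x by apply: sin_ge0_pi; rewrite x_ge0 x_le.
have := ler_wpM2r cos_ge0 (IHk k'x_le).
by rewrite mulrSr mulrDl mul1r cosD exprSr; nra.
Qed.

Lemma sin_natmul_le k x : 0 <= x -> k%:R * x <= pi ->
  sin (k%:R * x) <= k%:R * sin x.
Proof.
move=> x_ge0; elim: k => [|k IHk] kx_le; first by rewrite !mul0r sin0.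
have k'x_le : k%:R * x <= pi by apply: le_trans kx_le; rewrite ler_wpM2r ?ler_nat.
have x_le : x <= pi by apply: le_trans kx_le; rewrite ler_peMl ?ler1n.
have sin_kx_ge0 : 0 <= sin (k%:R * x) by rewrite sin_ge0_pi ?k'x_le ?mulr_ge0.
have sin_x_ge0 : 0 <= sin x by apply: sin_ge0_pi; rewrite x_ge0 x_le.
have := IHk k'x_le; have := cos_le1 x; have := cos_le1 (k%:R * x).
by rewrite mulrSr !mulrDl !mul1r sinD; nra.
Qed.

Lemma cos_pi_div_le n : (0 < n)%N -> cos (pi / n%:R) <= 1 - 2 / n%:R ^+ 2 :> R.
Proof.
move=> n_gt0; have n_gt0' : 0 < n%:R :> R by rewrite ltr0n.
pose x : R := pi / (2 * n%:R).
have x_ge0 : 0 <= x by rewrite divr_ge0 ?pi_ge0 ?mulr_ge0 ?ltW.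
have nx : n%:R * x = pi / 2 by rewrite /x; field; rewrite gt_eqF.
(* Jordan's bound sin (pi / 2n) >= 1 / n, via sin (n x) <= n sin x *)
have sin_x_ge : n%:R^-1 <= sin x.
  have nx_le : n%:R * x <= pi by rewrite nx ler_pdivrMr // ler_peMr ?pi_ge0 ?ler1n.
  have := sin_natmul_le n x x_ge0 nx_le; rewrite nx sin_pihalf.
  by rewrite -(ler_pM2l n_gt0') mulfV ?gt_eqF.
have -> : pi / n%:R = x *+ 2 by rewrite /x -mulr_natr; field; rewrite gt_eqF.
have : n%:R^-1 ^+ 2 <= sin x ^+ 2.
  by rewrite lerXn2r // nnegrE ?(le_trans _ sin_x_ge) // invr_ge0 ltW.
by rewrite cos_mulr2n cos2sin2 exprVn; lra.
Qed.
Lemma cos_pi_div_ge0 n : (1 < n)%N -> 0 <= cos (pi / n%:R) :> R.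
Proof.
move=> n_gt1; have n_gt0 : 0 < n%:R :> R by rewrite ltr0n ltnW.
have pi_div_ge0 : 0 <= pi / n%:R :> R by rewrite divr_ge0 ?pi_ge0 ?ltW.
apply: cos_ge0_pihalf; rewrite (le_trans _ pi_div_ge0) ?oppr_le0 ?divr_ge0 ?pi_ge0 //=.
by rewrite ler_pdivrMr // mulrAC ler_pdivlMr // ler_pM2l ?pi_gt0 // ler_nat.
Qed.
End Trigonometry.

Section RealInequalities.
Variable R : realFieldType.
Local Open Scope ring_scope.
Implicit Types (a c q : R) (s N : nat).

Lemma sqr_le_expr1D a s : 0 <= a -> (2 <= s)%N ->
  (1 + s%:R * a / 2) ^+ 2 <= (1 + a) ^+ s.
Proof.
move=> a_ge0; elim: s => // s IHs; rewrite leq_eqVlt => /predU1P[<- | s_ge2].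
  by rewrite mulrAC divff ?mul1r ?pnatr_eq0.
have S_ge1 : 1 <= s%:R :> R by rewrite ler1n ltnW.
have S_ge0 : 0 <= s%:R :> R by apply: le_trans S_ge1.
have step := ler_wpM2r (addr_ge0 ler01 a_ge0) (IHs s_ge2).
rewrite [(1 + a) ^+ s.+1]exprSr; apply: le_trans step; rewrite [s.+1%:R]mulrSr.
have a2 : 0 <= a * a by rewrite mulr_ge0.
have := mulr_ge0 (mulr_ge0 S_ge0 S_ge0) (mulr_ge0 a2 a_ge0).
have : 0 <= (s%:R - 1) * (a * a) by rewrite mulr_ge0 // subr_ge0.
by rewrite !expr2; nra.
Qed.

Lemma expr_mul_sqr_le1 a c s : 0 <= a -> 0 <= c -> c <= 1 - a -> (2 <= s)%N ->
  c ^+ s * (1 + s%:R * a / 2) ^+ 2 <= 1.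
Proof.
move=> a_ge0 c_ge0 c_le s_ge2.
have cs_le : c ^+ s <= (1 - a) ^+ s by rewrite lerXn2r // nnegrE (le_trans c_ge0).
apply: (le_trans (y := (1 - a) ^+ s * (1 + a) ^+ s)).
  apply: (le_trans (ler_wpM2l (exprn_ge0 _ c_ge0) (sqr_le_expr1D a s a_ge0 s_ge2))).
  by rewrite ler_wpM2r ?exprn_ge0 ?addr_ge0.
have a_le1 : a <= 1 by move: (le_trans c_ge0 c_le); rewrite subr_ge0.
by rewrite -exprMn exprn_ile1 //; nra.
Qed.

Lemma geometric_sum_bound q N : 0 <= q ->
  (1 - q) * \sum_(t < N) q ^+ t.+1 <= q.
Proof.
move=> q_ge0; under eq_bigr do rewrite exprS.
rewrite -mulr_sumr mulrCA -opprB mulNr -subrX1 opprB mulrBr mulr1.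
by rewrite gerBl -exprS exprn_ge0.
Qed.
End RealInequalities.

Definition binom_mod (n s j : nat) : nat :=
  \sum_(k < s.+1) 'C(s, k) * (k == j %[mod n]).

Section BinomialResidues.
Variable R : realType.
Local Open Scope ring_scope.
Implicit Types (n s j u : nat).

Lemma binom_mod_fourier n s j : (0 < n)%N ->
  n%:R * (binom_mod n s j)%:R = \sum_(t < n)
    (2 * cos (pi * t%:R / n%:R)) ^+ s * cos ((s%:R - 2 * j%:R) * pi * t%:R / n%:R)
  :> R.
Proof.
move=> n_gt0; have n_neq0 : n%:R != 0 :> R by rewrite pnatr_eq0 -lt0n.
rewrite /binom_mod natr_sum mulr_sumr.
under eq_bigr => k _.
  rewrite natrM mulrCA (mulrC n%:R) -(sum_cos_2pi_frac_sub R n k j n_gt0) mulr_sumr.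
over.
rewrite exchange_big; apply: eq_bigr => t _ /=.
set th : R := pi *+ 2 * t%:R / n%:R.
have -> : pi * t%:R / n%:R = th / 2 by rewrite /th -mulr_natr; field.
have -> : (s%:R - 2 * j%:R) * pi * t%:R / n%:R = s%:R * th / 2 + - (j%:R * th).
  by rewrite /th -mulr_natr; field.
rewrite -sum_binomial_cos; apply: eq_bigr => k _.
by congr (_ * cos _); rewrite /th -mulr_natr; field.
Qed.

Definition cos_tail n s : R :=
  \sum_(t < n.-1) `|cos (pi * t.+1%:R / n%:R)| ^+ s.

Lemma binom_mod_near_mean n s j : (0 < n)%N ->
  `|n%:R * (binom_mod n s j)%:R - 2 ^+ s| <= 2 ^+ s * cos_tail n s.
Proof.
move=> n_gt0; rewrite binom_mod_fourier // -(prednK n_gt0) big_ord_recl /=.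
rewrite !(mulr0, mul0r) cos0 !mulr1 (addrC (2 ^+ s)) addrK prednK // /cos_tail mulr_sumr.
apply: le_trans (ler_norm_sum _ _ _) _; apply: ler_sum => t _.
rewrite normrM normrX normrM ger0_norm // exprMn /bump /= add1n.
by rewrite -[X in _ <= X]mulr1 ler_wpM2l ?mulr_ge0 ?exprn_ge0 ?cos_max.
Qed.

Lemma abs_cos_expr_le n s u : (1 < n)%N -> (u <= n)%N ->
  `|cos (pi * u%:R / n%:R)| ^+ s
    <= (cos (pi / n%:R) ^+ s) ^+ u + (cos (pi / n%:R) ^+ s) ^+ (n - u) :> R.
Proof.
move=> n_gt1 u_le_n; have n_gt0 : 0 < n%:R :> R by rewrite ltr0n ltnW.
have n_neq0 : n%:R != 0 :> R by rewrite gt_eqF.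
set x := pi / n%:R; set c := cos x.
have x_ge0 : 0 <= x by rewrite divr_ge0 ?pi_ge0 ?ltW.
have c_ge0 : 0 <= c := cos_pi_div_ge0 R n n_gt1.
have ux : pi * u%:R / n%:R = u%:R * x by rewrite /x mulrAC mulrC mulrA.
have n_ux : (n - u)%:R * x = pi - u%:R * x.
  by rewrite natrB ?u_le_n // /x; field.
have ux_le : u%:R * x <= pi.
  by rewrite -ux ler_pdivrMr // ler_pM2l ?pi_gt0 // ler_nat.
have n_ux_le : (n - u)%:R * x <= pi by rewrite n_ux gerBl mulr_ge0.
rewrite ux (exprAC c s u) (exprAC c s (n - u)).
have [cos_ge0 | cos_lt0] := leP 0 (cos (u%:R * x)).
  rewrite ger0_norm //; apply: (le_trans (y := (c ^+ u) ^+ s)).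
    by rewrite lerXn2r ?nnegrE ?exprn_ge0 ?cos_natmul_le_expr.
  by rewrite lerDl exprn_ge0 ?exprn_ge0.
rewrite ltr0_norm //.
have -> : - cos (u%:R * x) = cos ((n - u)%:R * x) by rewrite n_ux cosB cospi sinpi; ring.
apply: (le_trans (y := (c ^+ (n - u)) ^+ s)).
  rewrite lerXn2r ?nnegrE ?exprn_ge0 ?cos_natmul_le_expr //.
  by rewrite n_ux cosB cospi sinpi; lra.
by rewrite lerDr exprn_ge0 ?exprn_ge0.
Qed.

Lemma cos_tail_le_geometric n s : (1 < n)%N ->
  cos_tail n s <= 2 * \sum_(t < n.-1) (cos (pi / n%:R) ^+ s) ^+ t.+1.
Proof.
move=> n_gt1; set q := cos (pi / n%:R) ^+ s.
apply: (le_trans (y := \sum_(t < n.-1) (q ^+ t.+1 + q ^+ (n - t.+1)))).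
  by apply: ler_sum => t _; apply: abs_cos_expr_le; have := ltn_ord t; lia.
rewrite big_split /=.
have -> : \sum_(t < n.-1) q ^+ (n - t.+1) = \sum_(t < n.-1) q ^+ t.+1.
  rewrite (reindex_inj rev_ord_inj); apply: eq_bigr => t _ /=.
  by congr (_ ^+ _); have := ltn_ord t; lia.
by rewrite mulr_natl mulr2n.
Qed.

Lemma sqrt_div_nat_ge1 n s : (0 < n)%N -> (n ^ 2 <= s)%N ->
  1 <= Num.sqrt s%:R / n%:R :> R.
Proof.
move=> n_gt0 s_ge; rewrite ler_pdivlMr ?ltr0n // mul1r.
rewrite -[n%:R]ger0_norm ?ler0n // -sqrtr_sqr ler_wsqrtr //.
by rewrite -natrX ler_nat.
Qed.

Lemma cos_tail_bound n s : (1 < n)%N -> (n ^ 2 <= s)%N ->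
  cos_tail n s * (Num.sqrt s%:R / n%:R + 2) <= 2.
Proof.
move=> n_gt1 s_ge; have n_gt0 : (0 < n)%N := ltnW n_gt1.
have n_neq0 : n%:R != 0 :> R by rewrite pnatr_eq0 -lt0n.
have s_ge2 : (2 <= s)%N by apply: leq_trans s_ge; rewrite (leq_trans n_gt1) ?leq_pmulr.
set z := Num.sqrt s%:R / n%:R; have z_ge1 : 1 <= z := sqrt_div_nat_ge1 n s n_gt0 s_ge.
have E_le := cos_tail_le_geometric n s n_gt1.
set c := cos (pi / n%:R) in E_le; set q := c ^+ s in E_le.
have c_ge0 : 0 <= c := cos_pi_div_ge0 R n n_gt1.
have q_ge0 : 0 <= q by rewrite exprn_ge0.
have a_ge0 : 0 <= 2 / n%:R ^+ 2 :> R by rewrite divr_ge0 ?exprn_ge0 ?ler0n.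
have sa : s%:R * (2 / n%:R ^+ 2) / 2 = z ^+ 2.
  by rewrite /z exprMn sqr_sqrtr ?ler0n // exprVn; field.
have q_small : q * (1 + z ^+ 2) ^+ 2 <= 1.
  by rewrite -sa expr_mul_sqr_le1 // cos_pi_div_le.
have q_le : q * (z + 3) <= 1.
  apply: le_trans q_small; rewrite ler_wpM2l // !expr2.
  have z2 : 1 <= z * z by rewrite -[1]mulr1 ler_pM ?ler01.
  by nra.
set G := \sum_(t < n.-1) q ^+ t.+1 in E_le.
have G_ge0 : 0 <= G by rewrite sumr_ge0 // => t _; rewrite exprn_ge0.
have G_le : (1 - q) * G <= q by exact: geometric_sum_bound.
have G_bound : G * (z + 2) <= 1.
  have q_lt1 : 0 < 1 - q by nra.
  rewrite -(ler_pM2l q_lt1) mulr1 mulrA.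
  by apply: le_trans (ler_wpM2r _ G_le) _; nra.
apply: le_trans (ler_wpM2r _ E_le) _; first lra.
by rewrite -mulrA; lra.
Qed.

Lemma binom_mod_ratio n s j j' : (1 < n)%N -> (n ^ 2 <= s)%N ->
  (binom_mod n s j)%:R <= (1 + 4 * n%:R / Num.sqrt s%:R) * (binom_mod n s j')%:R :> R.
Proof.
move=> n_gt1 s_ge; have n_gt0 : (0 < n)%N := ltnW n_gt1.
have n_gt0' : 0 < n%:R :> R by rewrite ltr0n.
have z_ge1 := sqrt_div_nat_ge1 n s n_gt0 s_ge; set z := Num.sqrt s%:R / n%:R in z_ge1.
have -> : 4 * n%:R / Num.sqrt s%:R = 4 / z.
  by rewrite /z invf_div mulrA.
have E_bound := cos_tail_bound n s n_gt1 s_ge; fold z in E_bound.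
set E := cos_tail n s in E_bound.
have := binom_mod_near_mean n s j n_gt0; rewrite ler_distl => /andP[_ Sj_le].
have := binom_mod_near_mean n s j' n_gt0; rewrite ler_distl => /andP[Sj'_ge _].
set A : R := 2 ^+ s in Sj_le Sj'_ge; have A_gt0 : 0 < A by rewrite exprn_gt0.
set w := 4 / z; have wz : w * z = 4 by rewrite /w mulfVK // gt_eqF // (lt_le_trans ltr01).
have w_ge0 : 0 <= w by rewrite divr_ge0 // (le_trans ler01).
(* (1 + E) <= (1 + w) (1 - E) is equivalent to E (z + 2) <= 2 *)
have ratio_bound : A * (1 + E) <= (1 + w) * (A * (1 - E)).
  have wE_bound := ler_wpM2l w_ge0 E_bound.
  have wzE : w * z * E = 4 * E by rewrite wz.
  by rewrite [X in _ <= X]mulrCA ler_pM2l //; nra.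
rewrite -(ler_pM2l n_gt0') mulrCA; apply: le_trans Sj_le _.
apply: le_trans (_ : (1 + w) * (A * (1 - E)) <= _).
  by move: ratio_bound; rewrite mulrDr mulr1.
by rewrite ler_wpM2l ?addr_ge0 // mulrBr mulr1.
Qed.
End BinomialResidues.

Lemma sum_binS (f : nat -> nat) s :
  \sum_(k < s.+2) 'C(s.+1, k) * f k
  = \sum_(k < s.+1) 'C(s, k) * f k + \sum_(k < s.+1) 'C(s, k) * f k.+1.
Proof.
rewrite big_ord_recl bin0 mul1n.
under eq_bigr => k _ do rewrite binS mulnDl.
rewrite big_split /= addnA; congr (_ + _).
rewrite [RHS]big_ord_recl bin0 mul1n; congr (_ + _).
by rewrite big_ord_recr /= bin_small // mul0n addn0.
Qed.

Section PairSumsets.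
Variables (V : finZmodType) (b : V).
Hypothesis b_neq0 : b != 0%R.

Lemma msum_pairE (A : mset V) x :
  msum (mset_of_set [set 0%R; b]) A x = A x + A (x - b)%R.
Proof.
have shift a : \sum_(c : V) (a + c == x)%R * A c = A (x - a)%R.
  rewrite (bigD1 (x - a)%R) //= addrC subrK eqxx mul1n big1 ?addn0 // => c.
  by rewrite (can2_eq (addKr a) (addNKr a)) addrC => /negPf->.
rewrite /msum; under eq_bigr => a _.
  under eq_bigr => c _ do rewrite mulnCA.
  rewrite -big_distrr /= shift.
over.
rewrite (bigD1 0%R) // (bigD1 b) //= big1 ?addn0; last first.
  move=> a /andP[a_neqb a_neq0].
  by rewrite /mset_of_set !inE (negPf a_neq0) (negPf a_neqb).
by rewrite /mset_of_set !inE !eqxx orbT subr0 !mul1n.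
Qed.

Lemma msum_seq_nseq_pair s x :
  msum_seq (nseq s (mset_of_set [set 0%R; b])) x
  = \sum_(k < s.+1) 'C(s, k) * (b *+ k == x)%R.
Proof.
elim: s x => [|s IHs] x.
  by rewrite big_ord1 bin0 mul1n /= /mset_of_set inE eq_sym.
rewrite -[LHS]/(msum _ (msum_seq (nseq s _)) x) msum_pairE !IHs.
rewrite (sum_binS (fun k => (b *+ k == x)%R)); congr (_ + _); apply: eq_bigr => k _.
by rewrite mulrSr -subr_eq0 opprB addrA subr_eq0.
Qed.

Lemma msum_seq_nseq_pair_cycle s j :
  msum_seq (nseq s (mset_of_set [set 0%R; b])) (b *+ j)%R = binom_mod #[b]%g s j.
Proof.
rewrite msum_seq_nseq_pair; apply: eq_bigr => k _.
by rewrite -(eq_expg_mod_order b k j).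
Qed.

Theorem bias_msum_nseq_pair (R : realType) s : (#[b]%g ^ 2 <= s)%N ->
  bias_at_most (msum_seq (nseq s (mset_of_set [set 0%R; b]))) <[b]>%g
    (4 * #[b]%g%:R / Num.sqrt s%:R : R)%R.
Proof.
move=> s_ge a a_supp _ /cycleP[i ->].
have [k ->] : exists k, a = (b *+ k)%R.
  move: a_supp; rewrite msum_seq_nseq_pair.
  case: (pickP (fun k : 'I_s.+1 => (b *+ k == a)%R)) => [k /eqP <- _ | none].
    by exists k.
  by rewrite big1 // => k _; rewrite none muln0.
rewrite -mulrnDr !msum_seq_nseq_pair_cycle binom_mod_ratio //.
by rewrite ltn_neqAle order_gt0 andbT eq_sym order_eq1.
Qed.
End PairSumsets.

Theorem lemma6 (R : realType) (T : nat) (hT : (1 < T)%N) (b : 'Z_T)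
  (hb : b != 0%R) (s : nat) (hs : (T ^ 2 <= s)%N) :
  bias_at_most
    (msum_seq (nseq s (mset_of_set [set 0%R; b])))
    <[b]>%g
    ((4 * (#|<[b]>%g|)%:R / Num.sqrt (s%:R)) : R)%R.
Proof.
have order_le : (#[b]%g <= T)%N.
  by rewrite (leq_trans (max_card _)) // card_ord Zp_cast.
by apply: bias_msum_nseq_pair => //; rewrite (leq_trans _ hs) // leq_exp2r.
Qed.
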